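(* For every integer $k\ge2$ there is no integer $m\ge3$ with $S_{\mathbb{R}}(m-1,k)=m^k$; equivalently, $F_k(m)\neq0$ for all integers $k\ge2$ and $m\ge3$.
   Context: For an integer $k\ge1$ and real $m$, define $S_{\mathbb{R}}(m-1,k)=\dfrac{(m-1)^{k+1}-1}{k+1}+\dfrac{1+(m-1)^k}{2}$ (the Euler–MacLaurin approximation of $\sum_{i=1}^{m-1}i^k$ with all Bernoulli correction terms omitted), and $F_k(m)=2(k+1)\big(S_{\mathbb{R}}(m-1,k)-m^k\big)=2(m-1)^{k+1}+(k+1)(m-1)^k-2(k+1)m^k+(k-1)$. *)

From Stdlib Require Import Reals.
Open Scope R_scope.

(* S_R(m-1,k) = ((m-1)^(k+1) - 1)/(k+1) + (1 + (m-1)^k)/2, for real m, nat k. *)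
Definition S_R (m : R) (k : nat) : R :=
  ((m - 1) ^ (k + 1) - 1) / INR (k + 1) + (1 + (m - 1) ^ k) / 2.

(* With n = m - 1, the equation F_k(n + 1) = 0 reads
   2 n^(k+1) + (k+1) n^k + k = 2 (k+1) (n+1)^k + 1.
   Reducing modulo n, where (n+1)^k = 1, gives n | k + 3, so n <= k + 3.
   Bernoulli's inequality n^k (n+k) <= n (n+1)^k makes the right-hand side
   too large as soon as k >= 8 and n <= k + 3; the finitely many cases
   k < 8, n <= k + 3 are checked by computation. *)

From Stdlib Require Import Reals ZArith.
From Stdlib Require Import Arith Lia NArith Lra.
Open Scope R_scope.

(* F_k(n + 1) = 0 over nat, both sides moved so that no subtraction occurs. *)
Definition F_vanishes (k n : nat) : Prop :=
  (2 * n ^ (k + 1) + (k + 1) * n ^ k + k = 2 * (k + 1) * (n + 1) ^ k + 1)%nat.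

Lemma succ_pow_1_mod (n k : nat) : exists q, ((n + 1) ^ k = 1 + n * q)%nat.
Proof.
  induction k as [|k [q Hq]].
  - exists 0%nat; rewrite Nat.pow_0_r; lia.
  - exists (q + (1 + n * q))%nat; rewrite Nat.pow_succ_r', Hq; nia.
Qed.

Lemma bernoulli_pow (n k : nat) : (n ^ k * (n + k) <= n * (n + 1) ^ k)%nat.
Proof.
  induction k as [|k IH].
  - rewrite !Nat.pow_0_r; lia.
  - rewrite !Nat.pow_succ_r'.
    assert (n ^ k * (n + k) * (n + 1) <= n * (n + 1) ^ k * (n + 1))%nat by nia.
    nia.
Qed.

Lemma F_vanishes_divisor (k n : nat) : F_vanishes k n -> Nat.divide n (k + 3).
Proof.
  intros E.
  destruct (succ_pow_1_mod n k) as [q Hq].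
  assert (Hcases : (k = 0 \/ n ^ k = n * n ^ (k - 1))%nat).
  { destruct k as [|k']; [left; reflexivity | right].
    rewrite Nat.sub_succ, Nat.sub_0_r; apply Nat.pow_succ_r'. }
  destruct Hcases as [-> | Hnk].
  { unfold F_vanishes in E; simpl in E.
    replace n with 1%nat by lia; apply Nat.divide_1_l. }
  assert (Hmul : (n * (2 * n ^ k + (k + 1) * n ^ (k - 1))
                  = n * (2 * (k + 1) * q) + (k + 3))%nat).
  { unfold F_vanishes in E.
    rewrite Nat.add_1_r, Nat.pow_succ_r', Hq in E; rewrite Hnk in E |- *; nia. }
  apply (Nat.divide_add_cancel_r _ (n * (2 * (k + 1) * q))).
  - apply Nat.divide_factor_l.
  - rewrite <- Hmul; apply Nat.divide_factor_l.
Qed.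

(* For k >= 8 the bound n <= k + 3 gives
   1 + 2 n^2 + (k+1) n <= 2 (k+1) (n+k), which together with Bernoulli's
   inequality contradicts the equation once n^k >= n k. *)
Lemma F_vanishes_large_k (k n : nat) :
  (8 <= k)%nat -> (2 <= n)%nat -> (n <= k + 3)%nat -> ~ F_vanishes k n.
Proof.
  intros Hk Hn Hnk E; unfold F_vanishes in E.
  set (P := (n ^ k)%nat) in *; set (Q := ((n + 1) ^ k)%nat) in *.
  assert (Hbern : (P * (n + k) <= n * Q)%nat) by apply bernoulli_pow.
  assert (HP : (n * k <= P)%nat).
  { unfold P; replace k with (S (k - 1)) at 2 by lia.
    rewrite Nat.pow_succ_r'; apply Nat.mul_le_mono_l.
    pose proof (Nat.pow_gt_lin_r n (k - 1)); lia. }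
  assert (Hquad : (1 + 2 * n * n + (k + 1) * n <= 2 * (k + 1) * (n + k))%nat) by nia.
  assert (HPquad : (P * (1 + 2 * n * n + (k + 1) * n)
                    <= P * (2 * (k + 1) * (n + k)))%nat)
    by (apply Nat.mul_le_mono_l; exact Hquad).
  rewrite Nat.add_1_r, Nat.pow_succ_r' in E; fold P in E.
  assert (En : (n * (2 * (n * P) + (k + 1) * P + k) = 2 * (k + 1) * (n * Q) + n)%nat)
    by nia.
  nia.
Qed.

Lemma F_vanishes_small_k (k n : nat) :
  (2 <= k < 8)%nat -> (2 <= n <= k + 3)%nat -> ~ F_vanishes k n.
Proof.
  intros Hk Hn E; unfold F_vanishes in E.
  (* Evaluate in binary: the values are far too large for unary nat. *)
  apply (f_equal N.of_nat) in E.
  rewrite ?Nat2N.inj_add, ?Nat2N.inj_mul, ?Nat2N.inj_pow in E.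
  assert (k = 2 \/ k = 3 \/ k = 4 \/ k = 5 \/ k = 6 \/ k = 7)%nat as Hk' by lia.
  destruct Hk' as [-> | [-> | [-> | [-> | [-> | ->]]]]];
  (assert (n = 2 \/ n = 3 \/ n = 4 \/ n = 5 \/ n = 6 \/ n = 7 \/ n = 8 \/ n = 9
           \/ n = 10)%nat as Hn' by lia);
  destruct Hn' as [-> | [-> | [-> | [-> | [-> | [-> | [-> | [-> | ->]]]]]]]];
  vm_compute in E; discriminate.
Qed.

Lemma F_nonvanishing (k n : nat) : (2 <= k)%nat -> (2 <= n)%nat -> ~ F_vanishes k n.
Proof.
  intros Hk Hn E.
  assert (Hnk : (n <= k + 3)%nat)
    by (apply Nat.divide_pos_le; [lia | exact (F_vanishes_divisor k n E)]).
  destruct (Nat.le_gt_cases 8 k).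
  - exact (F_vanishes_large_k k n ltac:(lia) Hn Hnk E).
  - exact (F_vanishes_small_k k n ltac:(lia) ltac:(lia) E).
Qed.

Lemma S_R_eq_pow_shift (x : R) (k : nat) : S_R (x + 1) k = (x + 1) ^ k ->
  2 * x ^ (k + 1) + INR (k + 1) * x ^ k + INR k = 2 * INR (k + 1) * (x + 1) ^ k + 1.
Proof.
  unfold S_R; intros H.
  replace (x + 1 - 1) with x in H by ring.
  assert (Hk1 : INR (k + 1) <> 0) by (apply not_0_INR; lia).
  assert (H2 : (x ^ (k + 1) - 1) * 2 + (1 + x ^ k) * INR (k + 1)
               = 2 * INR (k + 1) * (x + 1) ^ k)
    by (rewrite <- H; field; exact Hk1).
  rewrite plus_INR in H2 |- *; simpl (INR 1) in H2 |- *; lra.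
Qed.

Theorem mainTheorem12 :
  forall (k : nat) (m : Z), (2 <= k)%nat -> (3 <= m)%Z ->
    S_R (IZR m) k <> (IZR m) ^ k.
Proof.
  intros k m Hk Hm H.
  set (n := Z.to_nat (m - 1)).
  assert (Hmn : IZR m = INR n + 1).
  { unfold n; rewrite INR_IZR_INZ, Z2Nat.id by lia; rewrite minus_IZR; simpl; ring. }
  apply (F_nonvanishing k n Hk ltac:(unfold n; lia)).
  apply INR_eq; rewrite Hmn in H; apply S_R_eq_pow_shift in H.
  unfold F_vanishes.
  rewrite !plus_INR, !mult_INR, !pow_INR, !plus_INR in *; simpl (INR 1) in *; simpl (INR 2).
  lra.
Qed.
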